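(* Let $\rho$ be the higher-order GSOS law of $\Sigma$ over $B$ induced by a relatively flat higher-order GSOS law $(\rho^j)_{j\in J}$ (all notions as in the context). Then every locally final coalgebra $z\colon Z\to B(Z,Z)$ extends to a denotational model: there is a morphism $a_\rho\colon \Sigma Z\to Z$ such that $(Z,a_\rho,z)$ is a $\rho$-bialgebra.
   Context: Let $\mathcal{C}$ be a category with binary products and binary coproducts (pairing $\langle f,g\rangle$, copairing $[f,g]$, injections $\mathsf{inl},\mathsf{inr}$, codiagonal $\nabla=[\mathrm{id},\mathrm{id}]$). Let $\Sigma\colon\mathcal{C}\to\mathcal{C}$ be an endofunctor with an initial algebra $(\mu\Sigma,\iota)$ and a free $\Sigma$-algebra $(\Sigma^\star X,\iota_X\colon\Sigma\Sigma^\star X\to\Sigma^\star X)$ with unit $\eta_X\colon X\to\Sigma^\star X$ on every object $X$; for a $\Sigma$-algebra $(A,a)$ write $\hat a\colon\Sigma^\star A\to A$ for the unique algebra morphism with $\hat a\cdot\eta_A=\mathrm{id}_A$. Let $B\colon\mathcal{C}^{op}\times\mathcal{C}\to\mathcal{C}$ be a bifunctor, and assume (standing assumption) that for every object $X$ the endofunctor $B(X,-)$ has a final coalgebra. A higher-order GSOS law of $\Sigma$ over $B$ is a family $\rho_{X,Y}\colon\Sigma(X\times B(X,Y))\to B(X,\Sigma^\star(X+Y))$ dinatural in $X$ and natural in $Y$. A higher-order $B$-coalgebra is a pair $(C,c\colon C\to B(C,C))$. A $\rho$-bialgebra is a triple $(X,a,c)$ with $a\colon\Sigma X\to X$, $c\colon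 X\to B(X,X)$ such that $c\cdot a=B(\mathrm{id},\hat a\cdot\Sigma^\star\nabla)\cdot\rho_{X,X}\cdot\Sigma\langle\mathrm{id},c\rangle$. A higher-order coalgebra $z\colon Z\to B(Z,Z)$ is locally final if $(Z,z)$ is a final coalgebra for the endofunctor $B(Z,-)$. A denotational model for $\rho$ is a $\rho$-bialgebra whose underlying higher-order coalgebra is locally final. Relative flatness: let $(J,<)$ be a well-founded relation and suppose $\Sigma=\coprod_{j\in J}\Sigma_j$ for endofunctors $\Sigma_j$ such that $\Sigma_j$ and $\Sigma_{<j}=\coprod_{i<j}\Sigma_i$ have free algebras on all objects (free monads $\Sigma_j^\star$, $\Sigma_{<j}^\star$). A relatively flat higher-order GSOS law is a $J$-indexed family $\rho^j_{X,Y}\colon\Sigma_j(X\times B(X,Y))\to B(X,\Sigma^\star_{<j}(X+Y)+\Sigma_j\Sigma^\star_{<j}(X+Y))$, dinatural in $X$ and natural in $Y$. It induces the higher-order GSOS law $\rho_{X,Y}=[B(\mathrm{id},e_{j,X+Y})\cdot\rho^j_{X,Y}]_{j\in J}$, where $e_{j,W}=[\mathsf{inj}^\star_{<j},\,\iota_W\cdot\mathsf{inj}_j\cdot\Sigma_j\mathsf{inj}^\star_{<j}]\colon\Sigma^\star_{<j}W+\Sigma_j\Sigma^\star_{<j}W\to\Sigma^\star W$, with $\mathsf{inj}_j\colon\Sigma_j\to\Sigma$, $\mathsf{inj}_{<j}\colon\Sigma_{<j}\to\Sigma$ the coproduct injections and $\mathsf{inj}^\star_{<j}\colon\Sigma^\star_{<j}\to\Sigma^\star$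 the induced monad morphism. *)

From Stdlib Require Import Relations.

Set Implicit Arguments.
Set Universe Polymorphism.

Record Category := {
  Ob :> Type;
  Hom : Ob -> Ob -> Type;
  idm : forall A, Hom A A;
  comp : forall A B C, Hom B C -> Hom A B -> Hom A C;
  comp_id_l : forall A B (f : Hom A B), comp (idm B) f = f;
  comp_id_r : forall A B (f : Hom A B), comp f (idm A) = f;
  comp_assoc : forall A B C D (h : Hom C D) (g : Hom B C) (f : Hom A B),
      comp h (comp g f) = comp (comp h g) f
}.
Arguments Hom {c} _ _.
Arguments idm {c} _.
Arguments comp {c A B C} _ _.
Notation "g ∘ f" := (comp g f) (at level 40, left associativity).

Section CatDefs.
Context {C : Category}.

Record BinProducts := {
  bprod : C -> C -> C;
  pr1 : forall A B, Hom (bprod A B) A;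
  pr2 : forall A B, Hom (bprod A B) B;
  pairing : forall {X A B}, Hom X A -> Hom X B -> Hom X (bprod A B);
  pr1_pair : forall X A B (f : Hom X A) (g : Hom X B), pr1 A B ∘ pairing f g = f;
  pr2_pair : forall X A B (f : Hom X A) (g : Hom X B), pr2 A B ∘ pairing f g = g;
  pair_uniq : forall X A B (f : Hom X A) (g : Hom X B) (h : Hom X (bprod A B)),
      pr1 A B ∘ h = f -> pr2 A B ∘ h = g -> h = pairing f g
}.

Record BinCoproducts := {
  bcoprod : C -> C -> C;
  inl_ : forall A B, Hom A (bcoprod A B);
  inr_ : forall A B, Hom B (bcoprod A B);
  copairing : forall {A B X}, Hom A X -> Hom B X -> Hom (bcoprod A B) X;
  copair_inl : forall A B X (f : Hom A X) (g : Hom B X), copairing f g ∘ inl_ A B = f;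
  copair_inr : forall A B X (f : Hom A X) (g : Hom B X), copairing f g ∘ inr_ A B = g;
  copair_uniq : forall A B X (f : Hom A X) (g : Hom B X) (h : Hom (bcoprod A B) X),
      h ∘ inl_ A B = f -> h ∘ inr_ A B = g -> h = copairing f g
}.

Record Functor := {
  F0 :> C -> C;
  F1 : forall {A B}, Hom A B -> Hom (F0 A) (F0 B);
  F1_id : forall A, F1 (idm A) = idm (F0 A);
  F1_comp : forall A B D (g : Hom B D) (f : Hom A B), F1 (g ∘ f) = F1 g ∘ F1 f
}.
Arguments F1 _ {A B} _.

(* bifunctors  C^op x C -> C *)
Record Bifunctor := {
  B0 :> C -> C -> C;
  B1 : forall {X X' Y Y'}, Hom X' X -> Hom Y Y' -> Hom (B0 X Y) (B0 X' Y');
  B1_id : forall X Y, B1 (idm X) (idm Y) = idm (B0 X Y);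
  B1_comp : forall X X' X'' Y Y' Y'' (f1 : Hom X' X) (f2 : Hom X'' X')
      (g1 : Hom Y Y') (g2 : Hom Y' Y''),
      B1 (f1 ∘ f2) (g2 ∘ g1) = B1 f2 g2 ∘ B1 f1 g1
}.
Arguments B1 _ {X X' Y Y'} _ _.

Record FreeAlg (F : Functor) (X : C) := {
  fa_car : C;
  fa_str : Hom (F fa_car) fa_car;
  fa_unit : Hom X fa_car;
  fa_ext : forall {A : C} (a : Hom (F A) A) (f : Hom X A), Hom fa_car A;
  fa_ext_alg : forall A (a : Hom (F A) A) (f : Hom X A),
      fa_ext a f ∘ fa_str = a ∘ F1 F (fa_ext a f);
  fa_ext_unit : forall A (a : Hom (F A) A) (f : Hom X A), fa_ext a f ∘ fa_unit = f;
  fa_ext_uniq : forall A (a : Hom (F A) A) (f : Hom X A) (h : Hom fa_car A),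
      h ∘ fa_str = a ∘ F1 F h -> h ∘ fa_unit = f -> h = fa_ext a f
}.
Arguments fa_car {F X} _.
Arguments fa_str {F X} _.
Arguments fa_unit {F X} _.
Arguments fa_ext {F X} _ {A} _ _.

Record InitialAlg (F : Functor) := {
  ia_car : C;
  ia_str : Hom (F ia_car) ia_car;
  ia_fold : forall {A} (a : Hom (F A) A), Hom ia_car A;
  ia_fold_alg : forall A (a : Hom (F A) A), ia_fold a ∘ ia_str = a ∘ F1 F (ia_fold a);
  ia_fold_uniq : forall A (a : Hom (F A) A) (h : Hom ia_car A),
      h ∘ ia_str = a ∘ F1 F h -> h = ia_fold a
}.

Record FunctorCoproduct (I : Type) (Fs : I -> Functor) (S : Functor) := {
  cinj : forall i X, Hom (Fs i X) (S X);
  cinj_nat : forall i X Y (f : Hom X Y), F1 S f ∘ cinj i X = cinj i Y ∘ F1 (Fs i) f;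
  ccopair : forall {X A}, (forall i, Hom (Fs i X) A) -> Hom (S X) A;
  ccopair_inj : forall X A (f : forall i, Hom (Fs i X) A) i, ccopair f ∘ cinj i X = f i;
  ccopair_uniq : forall X A (f : forall i, Hom (Fs i X) A) (h : Hom (S X) A),
      (forall i, h ∘ cinj i X = f i) -> h = ccopair f
}.
Arguments cinj {I Fs S} _ _ _.
Arguments ccopair {I Fs S} _ {X A} _.

Definition final_for_B (B : Bifunctor) (X Z : C) (z : Hom Z (B X Z)) : Prop :=
  forall (D : C) (d : Hom D (B X D)),
    exists h : Hom D Z, z ∘ h = B1 B (idm X) h ∘ d /\
      forall h' : Hom D Z, z ∘ h' = B1 B (idm X) h' ∘ d -> h' = h.

Definition locally_final (B : Bifunctor) (Z : C) (z : Hom Z (B Z Z)) : Prop :=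
  final_for_B B Z Z z.

Definition fmap {F : Functor} (fr : forall X, FreeAlg F X) {X Y : C} (f : Hom X Y)
  : Hom (fa_car (fr X)) (fa_car (fr Y)) :=
  fa_ext (fr X) (fa_str (fr Y)) (fa_unit (fr Y) ∘ f).

Definition hat {F : Functor} (fr : forall X, FreeAlg F X) {A : C} (a : Hom (F A) A)
  : Hom (fa_car (fr A)) A := fa_ext (fr A) a (idm A).

End CatDefs.

Arguments Functor : clear implicits.
Arguments Bifunctor : clear implicits.
Arguments BinProducts : clear implicits.
Arguments BinCoproducts : clear implicits.
Arguments F1 {C} _ {A B} _.
Arguments B1 {C} _ {X X' Y Y'} _ _.

Unset Implicit Arguments.
Section Flat.
Context {C : Category} (P : BinProducts C) (Q : BinCoproducts C).

Definition pmap {A A' B B' : C} (f : Hom A A') (g : Hom B B')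
  : Hom (bprod P A B) (bprod P A' B') :=
  pairing P (f ∘ pr1 P A B) (g ∘ pr2 P A B).
Definition cmap {A A' B B' : C} (f : Hom A A') (g : Hom B B')
  : Hom (bcoprod Q A B) (bcoprod Q A' B') :=
  copairing Q (inl_ Q A' B' ∘ f) (inr_ Q A' B' ∘ g).
Definition codiag (A : C) : Hom (bcoprod Q A A) A := copairing Q (idm A) (idm A).

Context (Sig : Functor C) (J : Type) (ltJ : J -> J -> Prop)
  (Sj : J -> Functor C) (SigCop : FunctorCoproduct Sj Sig)
  (Sless : J -> Functor C)
  (SlessCop : forall j, FunctorCoproduct (fun i : {i : J | ltJ i j} => Sj (proj1_sig i)) (Sless j))
  (freeS : forall X, FreeAlg Sig X)
  (freeSl : forall j X, FreeAlg (Sless j) X)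
  (B : Bifunctor C).

Definition inj_less (j : J) (X : C) : Hom (Sless j X) (Sig X) :=
  ccopair (SlessCop j) (fun i => cinj SigCop (proj1_sig i) X).

Definition inj_less_star (j : J) (W : C)
  : Hom (fa_car (freeSl j W)) (fa_car (freeS W)) :=
  fa_ext (freeSl j W) (fa_str (freeS W) ∘ inj_less j (fa_car (freeS W)))
         (fa_unit (freeS W)).

Definition Tj (j : J) (W : C) : C :=
  bcoprod Q (fa_car (freeSl j W)) (Sj j (fa_car (freeSl j W))).
Definition Tj_map (j : J) {W W' : C} (h : Hom W W') : Hom (Tj j W) (Tj j W') :=
  cmap (fmap (freeSl j) h) (F1 (Sj j) (fmap (freeSl j) h)).

Definition e_map (j : J) (W : C) : Hom (Tj j W) (fa_car (freeS W)) :=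
  copairing Q (inj_less_star j W)
    (fa_str (freeS W) ∘ cinj SigCop j (fa_car (freeS W)) ∘ F1 (Sj j) (inj_less_star j W)).

Definition flat_law_type : Type :=
  forall (j : J) (X Y : C),
    Hom (Sj j (bprod P X (B X Y))) (B X (Tj j (bcoprod Q X Y))).

Definition flat_dinatural (rho : flat_law_type) : Prop :=
  forall (j : J) (Y X X' : C) (f : Hom X X'),
    B1 B (idm X) (Tj_map j (cmap f (idm Y))) ∘ rho j X Y
       ∘ F1 (Sj j) (pmap (idm X) (B1 B f (idm Y)))
    = B1 B f (idm (Tj j (bcoprod Q X' Y))) ∘ rho j X' Y
       ∘ F1 (Sj j) (pmap f (idm (B X' Y))).

Definition flat_natural (rho : flat_law_type) : Prop :=
  forall (j : J) (X Y Y' : C) (g : Hom Y Y'),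
    B1 B (idm X) (Tj_map j (cmap (idm X) g)) ∘ rho j X Y
    = rho j X Y' ∘ F1 (Sj j) (pmap (idm X) (B1 B (idm X) g)).

Definition induced_law (rho : flat_law_type) (X Y : C)
  : Hom (Sig (bprod P X (B X Y))) (B X (fa_car (freeS (bcoprod Q X Y)))) :=
  ccopair SigCop (fun j => B1 B (idm X) (e_map j (bcoprod Q X Y)) ∘ rho j X Y).

Definition is_bialgebra (rho : flat_law_type) (X : C) (a : Hom (Sig X) X)
  (c : Hom X (B X X)) : Prop :=
  c ∘ a = B1 B (idm X) (hat freeS a ∘ fmap freeS (codiag X))
            ∘ induced_law rho X X ∘ F1 Sig (pairing P (idm X) c).

End Flat.

(* The components a_j : Σ_j Z -> Z of a_ρ are built by well-founded recursion
   on J.  Once the components below j are known they form a Σ_{<j}-algebra on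
   Z, so every Σ*_{<j}-term over Z + Z can be evaluated in Z.  By relative
   flatness, ρ^j produces at most one Σ_j-layer above such terms; the bialgebra
   law restricted to Σ_j is therefore a guarded equation for a_j, which the
   corecursion principle of the final B(Z,-)-coalgebra (Z, z) solves. *)

From Stdlib Require Import FunctionalExtensionality ClassicalEpsilon.

Section Generalities.
Context {C : Category}.

Lemma B1_idl_comp (B : Bifunctor C) X Y Y' Y'' (g : Hom Y Y') (h : Hom Y' Y'') :
  B1 B (idm X) (h ∘ g) = B1 B (idm X) h ∘ B1 B (idm X) g.
Proof. rewrite <- B1_comp, comp_id_l. reflexivity. Qed.

Lemma comp_copair (Q : BinCoproducts C) A B X Y
    (f : Hom A X) (g : Hom B X) (h : Hom X Y) :
  h ∘ copairing Q f g = copairing Q (h ∘ f) (h ∘ g).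
Proof.
  apply copair_uniq; rewrite <- comp_assoc.
  - rewrite copair_inl. reflexivity.
  - rewrite copair_inr. reflexivity.
Qed.

Lemma copair_cmap (Q : BinCoproducts C) A A' B B' X
    (f : Hom A' X) (g : Hom B' X) (h : Hom A A') (k : Hom B B') :
  copairing Q f g ∘ cmap Q h k = copairing Q (f ∘ h) (g ∘ k).
Proof.
  unfold cmap. rewrite comp_copair, !comp_assoc, copair_inl, copair_inr.
  reflexivity.
Qed.

Lemma ccopair_ext I (Fs : I -> Functor C) (S : Functor C)
    (K : FunctorCoproduct Fs S) X A (f g : Hom (S X) A) :
  (forall i, f ∘ cinj K i X = g ∘ cinj K i X) -> f = g.
Proof.
  intro Hfg.
  rewrite (ccopair_uniq K X A (fun i => g ∘ cinj K i X) f Hfg).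
  symmetry. apply ccopair_uniq. reflexivity.
Qed.

Lemma hat_fmap (F : Functor C) (fr : forall X, FreeAlg F X) X A
    (a : Hom (F A) A) (f : Hom X A) :
  hat fr a ∘ fmap fr f = fa_ext (fr X) a f.
Proof.
  unfold hat, fmap. apply fa_ext_uniq.
  - rewrite <- comp_assoc, (fa_ext_alg (fr X)), comp_assoc, (fa_ext_alg (fr A)).
    rewrite <- comp_assoc, <- F1_comp. reflexivity.
  - rewrite <- comp_assoc, (fa_ext_unit (fr X)), comp_assoc, (fa_ext_unit (fr A)).
    apply comp_id_l.
Qed.

Section Corecursion.
Variables (Q : BinCoproducts C) (B : Bifunctor C) (X Z : C) (z : Hom Z (B X Z)).
Hypothesis zfin : final_for_B B X Z z.

Lemma final_endo_id (h : Hom Z Z) : z ∘ h = B1 B (idm X) h ∘ z -> h = idm Z.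
Proof.
  intro Hh. destruct (zfin Z z) as [u [_ Hu]].
  rewrite (Hu h Hh), (Hu (idm Z)); [reflexivity|].
  rewrite B1_id, comp_id_r, comp_id_l. reflexivity.
Qed.

(* Corecursion in the style of apomorphisms: the unique coalgebra morphism out
   of Z + D with structure [B(id, inl) ∘ z, d] is the identity on Z. *)
Lemma final_apo D (d : Hom D (B X (bcoprod Q Z D))) :
  exists h : Hom D Z, z ∘ h = B1 B (idm X) (copairing Q (idm Z) h) ∘ d.
Proof.
  destruct (zfin _ (copairing Q (B1 B (idm X) (inl_ Q Z D) ∘ z) d)) as [g [Hg _]].
  assert (Hg_inl : g ∘ inl_ Q Z D = idm Z).
  { apply final_endo_id.
    rewrite comp_assoc, Hg, <- comp_assoc, copair_inl, comp_assoc, <- B1_idl_comp.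
    reflexivity. }
  assert (Hg_copair : g = copairing Q (idm Z) (g ∘ inr_ Q Z D))
    by (apply copair_uniq; [exact Hg_inl | reflexivity]).
  exists (g ∘ inr_ Q Z D).
  rewrite comp_assoc, Hg, <- comp_assoc, copair_inr, <- Hg_copair. reflexivity.
Qed.

Lemma final_guarded_solution (S : Functor C) W (k : Hom W Z)
    (r : Hom (S Z) (B X (bcoprod Q W (S W)))) :
  exists a : Hom (S Z) Z,
    z ∘ a = B1 B (idm X) (copairing Q k (a ∘ F1 S k)) ∘ r.
Proof.
  destruct (final_apo _ (B1 B (idm X) (cmap Q k (F1 S k)) ∘ r)) as [a Ha].
  exists a.
  rewrite Ha, comp_assoc, <- B1_idl_comp, copair_cmap, comp_id_l. reflexivity.
Qed.
End Corecursion.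
End Generalities.

Section DenotationalModel.
Variables (C : Category) (P : BinProducts C) (Q : BinCoproducts C)
  (Sig : Functor C) (J : Type) (ltJ : J -> J -> Prop) (wf : well_founded ltJ)
  (Sj : J -> Functor C) (SigCop : FunctorCoproduct Sj Sig)
  (Sless : J -> Functor C)
  (SlessCop : forall j,
     FunctorCoproduct (fun i : {i : J | ltJ i j} => Sj (proj1_sig i)) (Sless j))
  (freeS : forall X, FreeAlg Sig X)
  (freeSl : forall j X, FreeAlg (Sless j) X)
  (B : Bifunctor C)
  (rho : flat_law_type P Q J Sj Sless freeSl B)
  (Z : C) (z : Hom Z (B Z Z)).
Hypothesis zfin : locally_final B Z z.

Local Notation inj_less := (inj_less Sig J ltJ Sj SigCop Sless SlessCop).
Local Notation inj_less_star :=
  (inj_less_star Sig J ltJ Sj SigCop Sless SlessCop freeS freeSl).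
Local Notation e_map := (e_map Q Sig J ltJ Sj SigCop Sless SlessCop freeS freeSl).
Local Notation ZZ := (bcoprod Q Z Z).

Lemma inj_less_natural j X Y (f : Hom X Y) :
  F1 Sig f ∘ inj_less j X = inj_less j Y ∘ F1 (Sless j) f.
Proof.
  apply (ccopair_ext _ _ _ (SlessCop j)). intro i. unfold inj_less.
  rewrite <- !comp_assoc, (ccopair_inj (SlessCop j)), (cinj_nat SigCop),
    (cinj_nat (SlessCop j)), comp_assoc, (ccopair_inj (SlessCop j)).
  reflexivity.
Qed.

Definition alg_below j (a : forall i, ltJ i j -> Hom (Sj i Z) Z) : Hom (Sless j Z) Z :=
  ccopair (SlessCop j) (fun i => a (proj1_sig i) (proj2_sig i)).

Definition eval_below j (a : forall i, ltJ i j -> Hom (Sj i Z) Z)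
  : Hom (fa_car (freeSl j ZZ)) Z :=
  hat (freeSl j) (alg_below j a) ∘ fmap (freeSl j) (codiag Q Z).

Definition rho_at j : Hom (Sj j Z) (B Z (Tj Q J Sj Sless freeSl j ZZ)) :=
  rho j Z Z ∘ F1 (Sj j) (pairing P (idm Z) z).

Definition component_step j (a : forall i, ltJ i j -> Hom (Sj i Z) Z)
  : Hom (Sj j Z) Z :=
  proj1_sig (constructive_indefinite_description _
    (final_guarded_solution Q B Z Z z zfin (Sj j) _ (eval_below j a) (rho_at j))).

Definition component : forall j, Hom (Sj j Z) Z :=
  Fix wf (fun j => Hom (Sj j Z) Z) component_step.

Lemma component_unfold j : component j = component_step j (fun i _ => component i).
Proof.
  apply (Fix_eq wf (fun j => Hom (Sj j Z) Z) component_step).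
  intros x f g Hfg. f_equal.
  apply functional_extensionality_dep. intro y.
  apply functional_extensionality_dep. apply Hfg.
Qed.

Local Notation eval_j j := (eval_below j (fun i _ => component i)).

Lemma component_guarded j :
  z ∘ component j
  = B1 B (idm Z) (copairing Q (eval_j j) (component j ∘ F1 (Sj j) (eval_j j)))
      ∘ rho_at j.
Proof.
  rewrite component_unfold. unfold component_step.
  destruct (constructive_indefinite_description _ _) as [a Ha]. exact Ha.
Qed.

Definition model_alg : Hom (Sig Z) Z := ccopair SigCop component.

Local Notation eval_ZZ := (fa_ext (freeS ZZ) model_alg (codiag Q Z)).

Lemma model_alg_cinj j : model_alg ∘ cinj SigCop j Z = component j.
Proof. apply ccopair_inj. Qed.

Lemma model_alg_inj_less j :
  model_alg ∘ inj_less j Z = alg_below j (fun i _ => component i).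
Proof.
  unfold inj_less, alg_below. apply ccopair_uniq. intro i.
  rewrite <- comp_assoc, (ccopair_inj (SlessCop j)), model_alg_cinj.
  reflexivity.
Qed.

Lemma eval_inj_less_star j : eval_ZZ ∘ inj_less_star j ZZ = eval_j j.
Proof.
  unfold eval_below. rewrite hat_fmap. apply fa_ext_uniq.
  - unfold inj_less_star.
    rewrite <- comp_assoc, (fa_ext_alg (freeSl j _)), !comp_assoc,
      (fa_ext_alg (freeS _)), <- (comp_assoc _ _ _ _ _ model_alg),
      inj_less_natural, comp_assoc, model_alg_inj_less, <- comp_assoc, <- F1_comp.
    reflexivity.
  - unfold inj_less_star.
    rewrite <- comp_assoc, (fa_ext_unit (freeSl j _)). apply fa_ext_unit.
Qed.

Lemma eval_e_map j :
  eval_ZZ ∘ e_map j ZZ = copairing Q (eval_j j) (component j ∘ F1 (Sj j) (eval_j j)).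
Proof.
  unfold e_map, Tj. rewrite comp_copair, eval_inj_less_star, !comp_assoc,
    (fa_ext_alg (freeS _)), <- (comp_assoc _ _ _ _ _ model_alg), cinj_nat,
    comp_assoc, model_alg_cinj, <- comp_assoc, <- F1_comp, eval_inj_less_star.
  reflexivity.
Qed.

Lemma model_is_bialgebra :
  is_bialgebra P Q Sig J ltJ Sj SigCop Sless SlessCop freeS freeSl B rho Z model_alg z.
Proof.
  unfold is_bialgebra. apply (ccopair_ext _ _ _ SigCop). intro j.
  rewrite <- comp_assoc, model_alg_cinj, component_guarded, <- eval_e_map,
    hat_fmap, <- comp_assoc, cinj_nat, comp_assoc.
  unfold induced_law, rho_at.
  rewrite <- (comp_assoc _ _ _ _ _ (B1 B (idm Z) eval_ZZ)), ccopair_inj,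
    B1_idl_comp, !comp_assoc.
  reflexivity.
Qed.
End DenotationalModel.

Theorem theorem3p9
  (C : Category) (P : BinProducts C) (Q : BinCoproducts C)
  (Sig : Functor C) (J : Type) (ltJ : J -> J -> Prop)
  (wf : well_founded ltJ)
  (Sj : J -> Functor C) (SigCop : FunctorCoproduct Sj Sig)
  (Sless : J -> Functor C)
  (SlessCop : forall j, FunctorCoproduct (fun i : {i : J | ltJ i j} => Sj (proj1_sig i)) (Sless j))
  (muSig : InitialAlg Sig)
  (freeS : forall X, FreeAlg Sig X)
  (freeSj : forall j X, FreeAlg (Sj j) X)
  (freeSl : forall j X, FreeAlg (Sless j) X)
  (B : Bifunctor C)
  (standing : forall X : C, exists (Z : C) (z : Hom Z (B X Z)), final_for_B B X Z z)
  (rho : flat_law_type P Q J Sj Sless freeSl B)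
  (rho_dinat : flat_dinatural P Q J Sj Sless freeSl B rho)
  (rho_nat : flat_natural P Q J Sj Sless freeSl B rho)
  (Z : C) (z : Hom Z (B Z Z)) (zfin : locally_final B Z z) :
  exists a : Hom (Sig Z) Z,
    is_bialgebra P Q Sig J ltJ Sj SigCop Sless SlessCop freeS freeSl B rho Z a z.
Proof.
  exists (model_alg C P Q Sig J ltJ wf Sj SigCop Sless SlessCop freeSl B rho Z z zfin).
  apply model_is_bialgebra.
Qed.
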